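(* For all integers $k,l\ge1$, $La^*([k]\times[l],\{\vee_2,\wedge_2\})=k+l-1$.
   Context: $[k]\times[l]$ is ordered coordinatewise. $\vee_2$ is the poset on three elements $a,b_1,b_2$ whose only relations are $a<b_1,a<b_2$; $\wedge_2$ is the poset on three elements $a,b_1,b_2$ whose only relations are $b_1<a,b_2<a$. For posets $P,R$, $P$ is a strong subposet of $R$ if there is an injection $i:P\to R$ with $p\le_P p'\iff i(p)\le_R i(p')$. A subset $F\subseteq Q$ is strong $\{\vee_2,\wedge_2\}$-free if neither $\vee_2$ nor $\wedge_2$ is a strong subposet of $F$ (induced order); $La^*(Q,\{\vee_2,\wedge_2\})$ is the maximum size of such a subset of $Q$. *)

From mathcomp Require Import all_boot.
Set Implicit Arguments. Unset Strict Implicit. Unset Printing Implicit Defensive.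

(* The grid poset [k] x [l], modelled on 'I_k * 'I_l (i.e. {0..k-1} x {0..l-1},
   order-isomorphic to {1..k} x {1..l}), ordered coordinatewise. *)
Definition grid_le (k l : nat) : rel ('I_k * 'I_l) :=
  fun p q => (p.1 <= q.1)%N && (p.2 <= q.2)%N.

(* V_2 on 'I_3: element 0 is a, elements 1,2 are b1,b2; only a < b1, a < b2. *)
Definition vee2_le : rel 'I_3 :=
  fun x y => (x == y) || ((val x == 0%N) && (val y != 0%N)).

(* Wedge_2 on 'I_3: element 0 is a, 1,2 are b1,b2; only b1 < a, b2 < a. *)
Definition wedge2_le : rel 'I_3 :=
  fun x y => (x == y) || ((val x != 0%N) && (val y == 0%N)).

Definition strong_subposet (P R : finType) (leP : rel P) (leR : rel R)
    (F : {set R}) : Prop :=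
  exists i : P -> R,
    [/\ injective i, (forall p, i p \in F) &
        (forall p p', leP p p' = leR (i p) (i p'))].

Definition vee_wedge_free (R : finType) (leR : rel R) (F : {set R}) : Prop :=
  ~ strong_subposet vee2_le leR F /\ ~ strong_subposet wedge2_le leR F.

From mathcomp Require Import all_boot.

Set Implicit Arguments.
Unset Strict Implicit.
Unset Printing Implicit Defensive.

(* Lower bound: the hook formed by the first column and the last row is a
   chain of size k + l - 1, and a strong copy of V_2 or Wedge_2 needs two
   incomparable elements.  Upper bound: send each point of a V_2-free set to
   its row if it is the highest point of that row, and to its column
   otherwise.  Two points x, y sent to the same column, x in an earlier row,
   would give a V_2 made of x, a point above x in its row, and y; and no
   point is sent to the last column.  So the map is injective into a set of
   k + l - 1 labels. *)

Lemma strong_subposet_total (P R : finType) (leP : rel P) (leR : rel R)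
    (F : {set R}) :
  strong_subposet leP leR F -> {in F &, forall x y, leR x y || leR y x} ->
  forall p p', leP p p' || leP p' p.
Proof. by move=> [i [_ iF iE]] totF p p'; rewrite !iE totF. Qed.

Lemma chain_vee_wedge_free (R : finType) (leR : rel R) (F : {set R}) :
  {in F &, forall x y, leR x y || leR y x} -> vee_wedge_free leR F.
Proof.
move=> totF; split=> /strong_subposet_total/(_ totF)
  /(_ (@Ordinal 3 1 isT) (@Ordinal 3 2 isT)) //.
Qed.

Section StrongVee.

Variables (R : finType) (leR : rel R).
Hypotheses (leR_refl : reflexive leR) (leR_trans : transitive leR).

Lemma vee2_strong_subposet (F : {set R}) (a b c : R) :
  a \in F -> b \in F -> c \in F -> leR a b -> leR a c ->
  ~~ leR b c -> ~~ leR c b -> strong_subposet vee2_le leR F.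
Proof.
move=> aF bF cF le_ab le_ac nle_bc nle_cb.
have nle_ba : ~~ leR b a by apply: contra nle_bc => /leR_trans; apply.
have nle_ca : ~~ leR c a by apply: contra nle_cb => /leR_trans; apply.
have le_bb := leR_refl b; have le_cc := leR_refl c; have le_aa := leR_refl a.
have ab : a != b by apply: contraNneq nle_bc => <-.
have ac : a != c by apply: contraNneq nle_cb => <-.
have bc : b != c by apply: contraNneq nle_bc => ->.
pose i (p : 'I_3) := match val p with 0 => a | 1 => b | _ => c end.
exists i; split.
- move=> [[|[|[|?]]] ?] [[|[|[|?]]] ?]; rewrite /i /= => e; try exact: val_inj;
  by move: ab ac bc; rewrite e eqxx.
- by move=> [[|[|[|?]]] ?].
- move=> [[|[|[|?]]] ?] [[|[|[|?]]] ?] //=;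
  by rewrite /vee2_le /i /= ?le_aa ?le_bb ?le_cc ?le_ab ?le_ac
    ?(negbTE nle_ba) ?(negbTE nle_ca) ?(negbTE nle_bc) ?(negbTE nle_cb).
Qed.

End StrongVee.

Lemma grid_le_refl (k l : nat) : reflexive (@grid_le k l).
Proof. by move=> x; rewrite /grid_le !leqnn. Qed.

Lemma grid_le_trans (k l : nat) : transitive (@grid_le k l).
Proof.
move=> y x z /andP[x1y1 x2y2] /andP[y1z1 y2z2].
by rewrite /grid_le (leq_trans x1y1) ?(leq_trans x2y2).
Qed.

Lemma grid_le_anti (k l : nat) : antisymmetric (@grid_le k l).
Proof.
move=> [x1 x2] [y1 y2] /andP[/andP[le1 le2] /andP[ge1 ge2]].
by congr (_, _); apply/ord_inj/anti_leq; rewrite /= ?le1 ?le2 ?ge1 ?ge2.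
Qed.

Section Hook.

Variables k l : nat.

Definition hook (u : 'I_k.+1 + 'I_l) : 'I_k.+1 * 'I_l.+1 :=
  match u with inl i => (i, ord0) | inr j => (ord_max, lift ord0 j) end.

Lemma hook_inj : injective hook.
Proof.
move=> [i|j] [i'|j'] /= []; rewrite /bump ?add1n ?add0n //.
- by move=> ->.
- by move=> /val_inj ->.
Qed.

Lemma hook_chain :
  {in hook @: setT &, forall x y, grid_le x y || grid_le y x}.
Proof.
move=> _ _ /imsetP[[i|j] _ ->] /imsetP[[i'|j'] _ ->];
  rewrite /grid_le /= ?leqnn ?leq0n ?leq_ord ?andbT ?orbT ?leq_total //.
Qed.

End Hook.

Section RowTop.

Variables (k l : nat) (F : {set 'I_k * 'I_l.+1}).
Hypothesis vee_free : ~ strong_subposet vee2_le (@grid_le k l.+1) F.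

Definition row_top (x : 'I_k * 'I_l.+1) :=
  [forall y in F, (y.1 == x.1) ==> (y.2 <= x.2)].

Lemma not_row_top x :
  ~~ row_top x -> exists2 z, z \in F & z.1 = x.1 /\ x.2 < z.2.
Proof.
rewrite negb_forall => /existsP[z]; rewrite negb_imply => /andP[zF].
by rewrite negb_imply -ltnNge => /andP[/eqP e lt]; exists z.
Qed.

Lemma row_top_below x y :
  x \in F -> y \in F -> x.2 = y.2 -> x.1 < y.1 -> row_top x.
Proof.
move=> xF yF e2 lt1; apply/idPn => /not_row_top[z zF [e1 lt2]].
apply: vee_free.
apply: (vee2_strong_subposet (@grid_le_refl _ _) (@grid_le_trans _ _) xF zF yF);
  rewrite /grid_le.
- by rewrite e1 leqnn ltnW.
- by rewrite e2 leqnn ltnW.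
- by rewrite -e2 (leqNgt z.2) lt2 andbF.
- by rewrite e1 (leqNgt y.1) lt1.
Qed.

Definition grid_label (x : 'I_k * 'I_l.+1) : 'I_k + 'I_l.+1 :=
  if row_top x then inl x.1 else inr x.2.

Lemma grid_label_inj : {in F &, injective grid_label}.
Proof.
move=> x y xF yF; rewrite /grid_label.
case tx: (row_top x); case ty: (row_top y) => // -[e].
- move/forall_inP/(_ y yF): tx; move/forall_inP/(_ x xF): ty.
  rewrite e eqxx /= => le_xy le_yx.
  by apply: grid_le_anti; rewrite /grid_le e leqnn le_xy le_yx.
- case: (ltngtP x.1 y.1) => [lt | gt | /val_inj e1].
  + by move: tx; rewrite (row_top_below xF yF).
  + by move: ty; rewrite (row_top_below yF xF).
  + by apply: grid_le_anti; rewrite /grid_le e e1 !leqnn.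
Qed.

Lemma grid_label_neq_last x : grid_label x != inr ord_max.
Proof.
rewrite /grid_label; case: ifPn => // /not_row_top[z _ [_ lt]].
by apply: contraTneq lt => -[->]; rewrite -leqNgt -ltnS.
Qed.

Lemma vee_free_card_leq : #|F| <= k + l.
Proof.
rewrite -(card_in_imset grid_label_inj).
have sub : grid_label @: F \subset ~: [set inr ord_max].
  apply/subsetP => _ /imsetP[x _ ->]; rewrite !inE; exact: grid_label_neq_last.
apply: leq_trans (subset_leq_card sub) _.
by rewrite cardsC1 card_sum !card_ord addnS.
Qed.

End RowTop.

Theorem theorem1p5 (k l : nat) (hk : (1 <= k)%N) (hl : (1 <= l)%N) :
  (exists F : {set 'I_k * 'I_l},
      vee_wedge_free (@grid_le k l) F /\ #|F| = (k + l - 1)%N) /\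
  (forall F : {set 'I_k * 'I_l},
      vee_wedge_free (@grid_le k l) F -> (#|F| <= k + l - 1)%N).
Proof.
case: k hk => // k _; case: l hl => // l _; rewrite addnS subn1 /=.
split.
- exists (@hook k l @: setT); split; first exact/chain_vee_wedge_free/hook_chain.
  by rewrite card_imset; [rewrite cardsT card_sum !card_ord addSn | exact: hook_inj].
- by move=> F [vee_free _]; exact: vee_free_card_leq.
Qed.
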